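(* Let $\mathbb{E}$ be a countable subset of $\mathbb{R}$ with $0\in\mathbb{E}$, and let $\mathcal{V}$ be a closed $\mathbb{E}$-vine over a Polish space $X$. If $\mathcal{V}$ is well founded, then $o(\mathcal{V})<\omega_1$.
   Context: For finite $G\subset\mathbb{N}$, $[\mathbb{E},G]=\{f:\mathbb{N}\to\mathbb{E}:\mathrm{supp}(f)\subset G\}$. An $\mathbb{E}$-bunch over $X$ is an element $(x_f)_{f\in[\mathbb{E},G]}\in X^{[\mathbb{E},G]}$, $G$ finite. For $\chi=(x_f)_{f\in[\mathbb{E},F]}$, $\psi=(y_f)_{f\in[\mathbb{E},G]}$, $\chi\preceq\psi$ means $F$ is an initial segment of $G$ and $y_f=x_f$ for $f\in[\mathbb{E},F]$. An $\mathbb{E}$-vine is a set $\mathcal{V}$ of $\mathbb{E}$-bunches closed under $\preceq$-predecessors; it is well founded if it has no infinite $\preceq$-chain; it is closed if $\mathcal{V}\cap X^{[\mathbb{E},G]}$ is closed in the product topology of $X^{[\mathbb{E},G]}$ for every finite $G$. Derivatives: $\mathcal{V}^{(1)}=\mathcal{V}\setminus\{\chi\in\mathcal{V}:\chi\text{ is }\preceq\text{-maximal}\}$, $\mathcal{V}^{(\alpha+1)}=(\mathcal{V}^{(\alpha)})^{(1)}$, $\mathcal{V}^{(\alpha)}=\bigcap_{\beta<\alpha}\mathcal{V}^{(\beta)}$ for limit $\alpha$; the index is $o(\mathcal{V})=\min\{\alpha:\mathcal{V}^{(\alpha)}=\emptyset\}$. *)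

From HB Require Import structures.
From mathcomp Require Import all_boot all_order all_algebra finmap.
From mathcomp Require Import all_classical all_reals all_analysis.
Set Implicit Arguments. Unset Strict Implicit. Unset Printing Implicit Defensive.
Import Order.TTheory GRing.Theory Num.Theory.
Local Open Scope classical_set_scope.
Local Open Scope ring_scope.

Section Vines.
Variables (R : realType) (E : set R) (X : topologicalType).

Definition inEG (G : {fset nat}) (f : nat -> R) : Prop :=
  (forall n, E (f n)) /\ (forall n, (n \notin G)%fset -> f n = 0).

Definition EG (G : {fset nat}) : Type := {f : nat -> R | inEG G f}.

Definition bunch : Type := {G : {fset nat} & EG G -> X}.

Definition initial_segment (F G : {fset nat}) : Prop :=
  (F `<=` G)%fset /\
  (forall a b, (a \in F)%fset -> (b \in G)%fset -> (b \notin F)%fset -> (a < b)%N).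

Definition bprec (chi psi : bunch) : Prop :=
  initial_segment (projT1 chi) (projT1 psi) /\
  forall (f : nat -> R) (h1 : inEG (projT1 chi) f) (h2 : inEG (projT1 psi) f),
    projT2 psi (exist _ f h2) = projT2 chi (exist _ f h1).

Definition is_vine (V : set bunch) : Prop :=
  forall chi psi, V psi -> bprec chi psi -> V chi.

Definition vine_well_founded (V : set bunch) : Prop :=
  forall C : set bunch, C `<=` V ->
    (forall a b, C a -> C b -> bprec a b \/ bprec b a) -> finite_set C.

Definition vine_closed (V : set bunch) : Prop :=
  forall G : {fset nat},
    closed ([set x : {ptws EG G -> X} | V (existT (fun G => EG G -> X) G x)]).

Definition vmaximal (V : set bunch) (chi : bunch) : Prop :=
  V chi /\ forall psi, V psi -> bprec chi psi -> psi = chi.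

Definition vderiv (V : set bunch) : set bunch :=
  [set chi | V chi /\ ~ vmaximal V chi].

(* A strict well-order on a type W, representing the ordinal alpha = otp(W)
   (W is the set of ordinals beta < alpha). *)
Definition strict_well_order (W : Type) (lt : W -> W -> Prop) : Prop :=
  (forall a b c, lt a b -> lt b c -> lt a c) /\
  (forall a b, lt a b \/ a = b \/ lt b a) /\
  well_founded lt.

(* the derivative of order beta, given the derivatives D gamma for gamma < beta,
   where the ordinals < beta are the elements of P *)
Definition deriv_step (V : set bunch) (W : Type) (lt : W -> W -> Prop)
   (P : W -> Prop) (D : W -> set bunch) : set bunch -> Prop :=
  fun A =>
    ((forall w, ~ P w) -> A = V) /\
    (forall m, P m -> (forall w, P w -> w = m \/ lt w m) -> A = vderiv (D m)) /\
    ((exists w, P w) -> (forall m, P m -> exists w, P w /\ lt m w) ->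
       A = [set chi | forall w, P w -> D w chi]).

(* D w = V^(beta_w) for every w in W, and A = V^(alpha), alpha = otp(W) *)
Definition transfinite_derivatives (V : set bunch) (W : Type)
   (lt : W -> W -> Prop) (D : W -> set bunch) (A : set bunch) : Prop :=
  (forall w, deriv_step V lt (fun v => lt v w) D (D w)) /\
  deriv_step V lt (fun _ => True) D A.

End Vines.

(* The ordinal is produced by a Kleene-Brouwer rank.  Extension of
      bunches becomes extension of codes, so proper extensions get
      KB-smaller codes; the codes live in the tree of "realisable" sequences.
   4. The tree of realisable codes has no infinite branch: along a branch the
      approximations form Cauchy sequences whose limits, by completeness of X
      and closedness of V, form an infinite chain of V, contradicting
      well-foundedness.
   The theorem takes W := the code tree with its Kleene-Brouwer order. *)
From HB Require Import structures.
From mathcomp Require Import all_boot all_order all_algebra finmap.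
From mathcomp Require Import all_classical all_reals all_analysis.
Import Order.TTheory GRing.Theory Num.Theory.
Local Open Scope classical_set_scope.
Local Open Scope ring_scope.
Set Implicit Arguments. Unset Strict Implicit. Unset Printing Implicit Defensive.

Lemma vderiv_extends (R : realType) (E : set R) (X : topologicalType)
    (A : set (bunch E X)) chi :
  vderiv A chi -> exists psi, [/\ A psi, bprec chi psi & psi <> chi].
Proof.
move=> [Achi nmax]; apply: contrapT => noext; apply: nmax; split=> // psi Apsi chipsi.
by apply: contrapT => ne; apply: noext; exists psi.
Qed.

Section TransfiniteDerivatives.
Variables (R : realType) (E : set R) (X : topologicalType) (V : set (bunch E X)).
Variables (W : Type) (lt : W -> W -> Prop).
Hypothesis lt_wo : strict_well_order lt.

Let lt_trans : forall a b c, lt a b -> lt b c -> lt a c. Proof. by case: lt_wo. Qed.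
Let lt_wf : well_founded lt. Proof. by case: lt_wo => _ []. Qed.
Let lt_irrefl : forall a, ~ lt a a.
Proof. by move=> a; elim: (lt_wf a) => {}a _ IH h; exact: (IH a h h). Qed.

Definition derivative_step (P : W -> Prop) (D : W -> set (bunch E X)) :
    set (bunch E X) := fun chi =>
  ((forall v, ~ P v) /\ V chi) \/
  (exists m, [/\ P m, forall v, P v -> v = m \/ lt v m & vderiv (D m) chi]) \/
  ((exists v, P v) /\ (forall m, P m -> exists v, P v /\ lt m v) /\
    forall v, P v -> D v chi).

(* A step only depends on D over P; needed to unfold the fixpoint below. *)
Lemma derivative_step_ext P D1 D2 : (forall v, P v -> D1 v = D2 v) ->
  derivative_step P D1 = derivative_step P D2.
Proof.
move=> D12; rewrite /derivative_step funeqE => chi; apply: propext.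
split=> [[|[[m [Pm mmax]]|[nP [nmax Dchi]]]]|[|[[m [Pm mmax]]|[nP [nmax Dchi]]]]];
  try by left.
- by rewrite D12 // => ?; right; left; exists m.
- by right; right; do 2!split=> //; move=> v Pv; rewrite -D12 //; exact: Dchi.
- by rewrite -D12 // => ?; right; left; exists m.
- by right; right; do 2!split=> //; move=> v Pv; rewrite D12 //; exact: Dchi.
Qed.

Lemma derivative_stepP P D : deriv_step V lt P D (derivative_step P D).
Proof.
split; [|split].
- move=> nP; rewrite funeqE => chi; apply: propext; split; last by left.
  by case=> [[]//|[[m [Pm _]]|[[v Pv] _]]]; [case: (nP _ Pm)|case: (nP _ Pv)].
- move=> m Pm mmax; rewrite funeqE => chi; apply: propext; split; last first.
    by move=> ?; right; left; exists m.
  case=> [[nP _]|[[m' [Pm' m'max Dchi]]|[_ [nmax _]]]]; first by case: (nP _ Pm).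
  + have [->//|mm'] := m'max _ Pm.
    by case: (mmax _ Pm') => [e|m'm]; [subst|case: (lt_irrefl (lt_trans mm' m'm))].
  + have [v [Pv mv]] := nmax _ Pm.
    by case: (mmax _ Pv) => [e|vm]; [subst; case: (lt_irrefl mv)|
                                     case: (lt_irrefl (lt_trans mv vm))].
- move=> [v0 Pv0] nmax; rewrite funeqE => chi; apply: propext; split; last first.
    by move=> ?; right; right; split; [exists v0|].
  case=> [[nP _]|[[m' [Pm' m'max _]]|[_ [_ ?]]]] //; first by case: (nP _ Pv0).
  have [v [Pv m'v]] := nmax _ Pm'.
  by case: (m'max _ Pv) => [e|vm']; [subst; case: (lt_irrefl m'v)|
                                     case: (lt_irrefl (lt_trans m'v vm'))].
Qed.

Definition derivative : W -> set (bunch E X) :=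
  Fix lt_wf (fun _ => set (bunch E X)) (fun w rec =>
    derivative_step (fun v => lt v w)
      (fun v => if pselect (lt v w) is left h then rec v h else set0)).

Lemma derivativeE w : derivative w = derivative_step (fun v => lt v w) derivative.
Proof.
rewrite /derivative Fix_eq; last first.
  by move=> x f1 f2 f12; apply: derivative_step_ext => v _; case: pselect.
by apply: derivative_step_ext => v ?; case: pselect.
Qed.

(* The derivative of order otp(W). *)
Definition final_derivative : set (bunch E X) :=
  derivative_step (fun _ => True) derivative.

Lemma derivatives_spec : transfinite_derivatives V lt derivative final_derivative.
Proof.
split; last exact: derivative_stepP.
by move=> w; rewrite derivativeE; apply: derivative_stepP.
Qed.

Variable g : bunch E X -> W.
Hypothesis g_decr : forall chi psi, V chi -> V psi -> bprec chi psi -> psi <> chi ->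
  lt (g psi) (g chi).

Lemma derivative_step_rank P chi :
  (forall v, P v -> forall psi, derivative v psi ->
     V psi /\ forall u, lt u v -> lt u (g psi)) ->
  derivative_step P derivative chi -> V chi /\ forall u, P u -> lt u (g chi).
Proof.
move=> IH [[nP Vchi]|[[m [Pm mmax Dchi]]|[[v0 Pv0] [nmax Dchi]]]].
- by split=> // u Pu; case: (nP _ Pu).
- have [Vchi _] := IH _ Pm _ Dchi.1.
  have [psi [Dpsi chipsi ne]] := vderiv_extends Dchi.
  have [Vpsi psi_rank] := IH _ Pm _ Dpsi.
  have lt_psi_chi := g_decr Vchi Vpsi chipsi ne.
  have lt_m_chi : lt m (g chi).
    have [mpsi|[->//|/psi_rank/lt_irrefl//]] := lt_wo.2.1 m (g psi).
    exact: lt_trans mpsi lt_psi_chi.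
  by split=> // u /mmax [->//|um]; exact: lt_trans um lt_m_chi.
- have [Vchi _] := IH _ Pv0 _ (Dchi _ Pv0).
  split=> // u /nmax [v [Pv uv]]; have [_ ] := IH _ Pv _ (Dchi _ Pv); exact.
Qed.

Lemma derivative_rank w chi : derivative w chi ->
  V chi /\ forall u, lt u w -> lt u (g chi).
Proof.
elim: (lt_wf w) chi => {}w _ IH chi; rewrite derivativeE.
by apply: derivative_step_rank => v vw psi; apply: IH.
Qed.

(* No rank lies above every element of W, so the final derivative is empty. *)
Lemma final_derivative_empty : final_derivative = set0.
Proof.
rewrite funeqE => chi; apply: propext; split=> // /derivative_step_rank.
case=> [v _ psi|_ /(_ (g chi) I)/lt_irrefl//]; exact: derivative_rank.
Qed.

End TransfiniteDerivatives.

Lemma derivatives_vanish (R : realType) (E : set R) (X : topologicalType)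
    (V : set (bunch E X)) (W : Type) (lt : W -> W -> Prop) (g : bunch E X -> W) :
  countable [set: W] -> strict_well_order lt ->
  (forall chi psi, V chi -> V psi -> bprec chi psi -> psi <> chi -> lt (g psi) (g chi)) ->
  exists (W : Type) (lt : W -> W -> Prop) (D : W -> set (bunch E X)) (A : set (bunch E X)),
    countable [set: W] /\ strict_well_order lt /\
    transfinite_derivatives V lt D A /\ A = set0.
Proof.
move=> cW lt_wo g_decr; exists W, lt, (derivative V lt_wo), (final_derivative V lt_wo).
by do 3!split=> //; [exact: derivatives_spec|exact: final_derivative_empty g_decr].
Qed.

Lemma not_Acc_descending (T : Type) (r : T -> T -> Prop) (x : T) :
  ~ Acc r x -> exists b : nat -> T, forall n, r (b n.+1) (b n).
Proof.
move=> nAx.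
have step y : ~ Acc r y -> exists z, r z y /\ ~ Acc r z.
  move=> nAy; apply: contrapT => nz; apply: nAy; constructor=> z rzy.
  by apply: contrapT => nAz; apply: nz; exists z.
pose next y := if pselect (exists z, r z y /\ ~ Acc r z) is left h
  then proj1_sig (cid h) else y.
have next_spec y : ~ Acc r y -> r (next y) y /\ ~ Acc r (next y).
  move=> nAy; rewrite /next; case: pselect => [h|/(_ (step _ nAy))//].
  exact: proj2_sig (cid h).
have nA n : ~ Acc r (iter n next x) by elim: n => //= n /next_spec [].
by exists (fun n => iter n next x) => n /=; apply: (next_spec _ (nA n)).1.
Qed.

Section KleeneBrouwer.
Variable T : countType.

(* The Kleene-Brouwer order: u <KB t iff u properly extends t, or u is to the
   left of t at their first difference (comparing codes in nat). *)
Fixpoint kb (u t : seq T) : bool :=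
  match u, t with
  | [::], _ => false
  | _ :: _, [::] => true
  | a :: u', b :: t' => (choice.pickle a < choice.pickle b)%N || ((a == b) && kb u' t')
  end.

Lemma kb_irr u : ~~ kb u u.
Proof. by elim: u => //= a u IH; rewrite ltnn eqxx. Qed.

Lemma kb_trans u t v : kb u t -> kb t v -> kb u v.
Proof.
elim: u t v => [|a u IH] [|b t] [|c v] //=.
case/orP=> [lab|/andP[/eqP-> kut]]; case/orP=> [lbc|/andP[/eqP<- ktv]].
- by rewrite (ltn_trans lab lbc).
- by rewrite lab.
- by rewrite lbc.
- by rewrite eqxx (IH _ _ kut ktv) orbT.
Qed.

Lemma kb_total u t : u <> t -> kb u t \/ kb t u.
Proof.
elim: u t => [|a u IH] [|b t] //=; [by right|by left|].
move=> ne; have [eab|nab] := eqVneq a b.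
  subst b; rewrite ltnn /=; apply: IH => e; apply: ne; by rewrite e.
have pne : choice.pickle a != choice.pickle b.
  by apply: contraNneq nab => /(pcan_inj choice.pickleK)->.
by case: (ltngtP (choice.pickle a) (choice.pickle b)) pne => // _ _; [left|right].
Qed.

Lemma kb_cat s u t : kb (s ++ u) (s ++ t) = kb u t.
Proof. by elim: s => //= a s ->; rewrite ltnn eqxx. Qed.

Lemma kb_prefix s w : ~~ kb s (s ++ w).
Proof. by elim: s => //= a s IH; rewrite ltnn eqxx. Qed.

Lemma kb_ext (s : seq T) a w : kb (s ++ a :: w) s.
Proof. by elim: s => //= x s IH; rewrite ltnn eqxx IH. Qed.

Definition tree_child (S : seq T -> Prop) (t s : seq T) : Prop :=
  S t /\ exists a, t = rcons s a.

Section WellFoundedTree.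
Variable S : seq T -> Prop.
Hypothesis S_prefix : forall s w, S (s ++ w) -> S s.
Hypothesis S_wf : forall s, Acc (tree_child S) s.

Definition kb_above (s : seq T) (u t : seq T) : Prop :=
  [/\ S u, exists w, u = s ++ w & kb u t].

(* Main induction, on s along the (well-founded) tree and, for a fixed s, on
   the code of the next letter: every node of S extending s is accessible
   for the KB order above s. *)
Lemma kb_above_acc s : forall w, S (s ++ w) -> Acc (kb_above s) (s ++ w).
Proof.
elim: (S_wf s) => {}s _ IH.
have acc_next a : forall w, S (s ++ a :: w) -> Acc (kb_above s) (s ++ a :: w).
  move code_a: (choice.pickle a) => n; elim/ltn_ind: n a code_a => n IHn a code_a w Sw.
  have Ssa : S (rcons s a) by apply: (@S_prefix _ w); rewrite cat_rcons.
  (* a node above (rcons s a) is accessible above s: a node KB-below it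
     above s either branches off s at a letter of smaller code, or stays
     above (rcons s a), where accessibility holds by the outer induction *)
  have lift t : Acc (kb_above (rcons s a)) t -> forall w', t = rcons s a ++ w' ->
      Acc (kb_above s) t.
    elim=> {}t _ IHt w' et; rewrite et; constructor=> u [Su [w1 eu] ku]; subst u.
    rewrite cat_rcons in ku; case: w1 Su ku => [|b w''] Su ku.
      by rewrite cats0 in ku; move: (kb_prefix s (a :: w')); rewrite ku.
    rewrite kb_cat /= in ku; case/orP: ku => [lba|/andP[/eqP eba kw]].
      have lt_b_n : (choice.pickle b < n)%N by rewrite -code_a.
      exact: (IHn _ lt_b_n b erefl w'' Su).
    subst b; apply: (IHt (s ++ a :: w'')); last by rewrite cat_rcons.
    by split=> //; [exists w''; rewrite cat_rcons|rewrite et -cat_rcons kb_cat].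
  rewrite -cat_rcons; apply: (lift _ _ w erefl).
  by apply: IH; [split=> //; exists a|rewrite cat_rcons].
case=> [|a w] Sw; last exact: acc_next.
rewrite cats0; constructor=> u [Su [[|b w''] eu] ku]; subst u; last exact: acc_next.
by rewrite cats0 in ku; move: (kb_irr s); rewrite ku.
Qed.

Lemma kb_acc t : S t -> Acc (fun u t => S u /\ kb u t) t.
Proof.
move=> St; have /= := @kb_above_acc [::] t St.
elim=> {St}t _ IH; constructor=> u [Su ku]; apply: IH.
by split=> //; exists u.
Qed.

Definition kb_node := {s : seq T | S s}.
Definition kb_lt (a b : kb_node) : Prop := kb (proj1_sig a) (proj1_sig b).

Lemma kb_lt_wo : strict_well_order kb_lt.
Proof.
split; [|split].
- by move=> [a ?] [b ?] [c ?]; rewrite /kb_lt /=; apply: kb_trans.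
- move=> [a ha] [b hb]; rewrite /kb_lt /=.
  have [e|ne] := eqVneq a b.
    by subst b; right; left; congr exist; exact: Prop_irrelevance.
  by case: (kb_total (elimN eqP ne)) => h; [left|right; right].
- move=> [a ha]; have H := kb_acc ha; move: ha.
  elim: H => {}a _ IH ha; constructor=> [[b hb]] kba.
  exact: (IH _ (conj hb kba) hb).
Qed.

Lemma kb_node_countable : countable [set: kb_node].
Proof.
apply/countable_injP; exists (fun x => choice.pickle (proj1_sig x)).
move=> [a ha] [b hb] _ _ /= /(pcan_inj choice.pickleK) e; subst b.
by congr exist; exact: Prop_irrelevance.
Qed.

End WellFoundedTree.
End KleeneBrouwer.

Section Bunches.
Variables (R : realType) (E : set R) (X : topologicalType).
Hypothesis E0 : E 0.

Local Notation bunch := (bunch E X).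
Local Notation inEG := (inEG E).
Local Notation bprec := (@bprec R E X).

Definition zeroEG (G : {fset nat}) : EG E G :=
  exist _ (fun _ => 0) (conj (fun _ => E0) (fun _ _ => erefl)).

(* The value of a bunch at an arbitrary function f (junk outside [E,G]); it
   frees statements from the membership proof carried by elements of [E,G]. *)
Definition valueAt (b : bunch) (f : nat -> R) : X :=
  if pselect (inEG (projT1 b) f) is left h then projT2 b (exist _ f h)
  else projT2 b (zeroEG _).

Lemma valueAtE (b : bunch) f (h : inEG (projT1 b) f) :
  projT2 b (exist _ f h) = valueAt b f.
Proof.
rewrite /valueAt; case: pselect => [h'|//]; congr (projT2 b _); congr exist.
exact: Prop_irrelevance.
Qed.

Lemma inEG_sub F G f : (F `<=` G)%fset -> inEG F f -> inEG G f.
Proof.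
move=> /fsubsetP FG [Ef f0]; split=> // n nG; apply: f0.
by apply: contra nG; apply: FG.
Qed.

Lemma bprec_val a b f : bprec a b -> inEG (projT1 a) f -> valueAt b f = valueAt a f.
Proof.
move=> [[sub _] ab] hf.
by rewrite -(valueAtE hf) -(valueAtE (inEG_sub sub hf)) ab.
Qed.

Lemma bunch_eta (b : bunch) G : projT1 b = G ->
  b = existT (fun G => EG E G -> X) G (fun fp => valueAt b (proj1_sig fp)).
Proof.
case: b => G' x /= e; subst G'; congr existT; apply: funext => -[f hf] /=.
by rewrite -(valueAtE (b := existT _ G x)).
Qed.

Lemma bunch_ext (a b : bunch) : projT1 a = projT1 b ->
  (forall f, inEG (projT1 a) f -> valueAt a f = valueAt b f) -> a = b.
Proof.
move=> e ab; rewrite (bunch_eta (erefl (projT1 a))) (bunch_eta (esym e)).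
by congr existT; apply: funext => -[f hf] /=; exact: ab.
Qed.

Lemma initial_refl G : initial_segment G G.
Proof. by split=> // a b _ ->. Qed.

Lemma initial_trans F G H :
  initial_segment F G -> initial_segment G H -> initial_segment F H.
Proof.
move=> [FG hFG] [GH hGH]; split; first exact: fsubset_trans FG GH.
move=> a b aF bH bF; have [bG|bG] := boolP (b \in G); first exact: hFG.
by apply: hGH => //; apply: (fsubsetP FG).
Qed.

Lemma bprec_refl a : bprec a a.
Proof.
split; first exact: initial_refl.
by move=> f h1 h2; rewrite (valueAtE h1) (valueAtE h2).
Qed.

Lemma bprec_trans a b c : bprec a b -> bprec b c -> bprec a c.
Proof.
move=> ab bc; split; first exact: initial_trans ab.1 bc.1.
move=> f h1 h2; rewrite (valueAtE h1) (valueAtE h2).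
by rewrite (bprec_val bc (inEG_sub ab.1.1 h1)) (bprec_val ab h1).
Qed.

Definition restr (chi : bunch) (F : {fset nat}) : bunch :=
  existT (fun G => EG E G -> X) F (fun fp => valueAt chi (proj1_sig fp)).

Lemma valueAt_restr chi F f : inEG F f -> valueAt (restr chi F) f = valueAt chi f.
Proof. by move=> hf; rewrite -(valueAtE (b := restr chi F) hf). Qed.

Lemma bprec_restr chi F G : initial_segment F G -> bprec (restr chi F) (restr chi G).
Proof. by split. Qed.

Lemma bprec_restr_full chi F : initial_segment F (projT1 chi) -> bprec (restr chi F) chi.
Proof.
move=> FG; split=> // f h1 h2.
by rewrite (valueAtE h1) (valueAtE h2) valueAt_restr.
Qed.

End Bunches.
Definition sortG (G : {fset nat}) : seq nat := sort leq (enum_fset G).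

Lemma sortG_ltn G : sorted ltn (sortG G).
Proof.
by rewrite ltn_sorted_uniq_leq sort_uniq fset_uniq sort_sorted //; apply: leq_total.
Qed.

Lemma mem_sortG G x : (x \in sortG G) = (x \in G).
Proof. by rewrite mem_sort. Qed.

Lemma size_sortG G : size (sortG G) = #|` G|.
Proof. by rewrite size_sort. Qed.

Lemma sortG_init F G : initial_segment F G -> sortG G = sortG F ++ sortG (G `\` F)%fset.
Proof.
move=> [FG hFG]; apply: (irr_sorted_eq (leT := ltn)).
- exact: ltn_trans.
- exact: ltnn.
- exact: sortG_ltn.
- rewrite sorted_pairwise; last exact: ltn_trans.
  rewrite pairwise_cat; apply/and3P; split.
  + by apply/allrelP => a b; rewrite !mem_sortG inE => aF /andP[bF bG]; exact: hFG.
  + rewrite -sorted_pairwise; [exact: sortG_ltn|exact: ltn_trans].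
  + rewrite -sorted_pairwise; [exact: sortG_ltn|exact: ltn_trans].
- move=> x; rewrite mem_cat !mem_sortG inE.
  by case xF: (x \in F) => /=; [rewrite (fsubsetP FG)|rewrite ?andbT].
Qed.

Definition Gseg (G : {fset nat}) (j : nat) : {fset nat} :=
  [fset x in take j (sortG G)]%fset.

Lemma mem_Gseg G j x : (x \in Gseg G j) = (x \in take j (sortG G)).
Proof. by rewrite inE. Qed.

Lemma Gseg_sub G j : (Gseg G j `<=` G)%fset.
Proof. by apply/fsubsetP => x; rewrite mem_Gseg => /mem_take; rewrite mem_sortG. Qed.

Lemma card_Gseg G j : (j <= #|` G|)%N -> #|` Gseg G j| = j.
Proof.
move=> jG; rewrite card_fseq undup_id ?size_take ?size_sortG.
  by case: ltnP jG => // ? ?; apply/eqP; rewrite eqn_leq; apply/andP.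
by apply: take_uniq; rewrite sort_uniq fset_uniq.
Qed.

Lemma Gseg_init G j k : (j <= k)%N -> initial_segment (Gseg G j) (Gseg G k).
Proof.
move=> jk; split.
  apply/fsubsetP => x; rewrite !mem_Gseg => xj.
  by rewrite -(take_takel _ jk) in xj; apply: mem_take xj.
move=> a b; rewrite !mem_Gseg => aj bk bj.
have sk : sorted ltn (take k (sortG G)).
  move: (sortG_ltn G); rewrite -{1}(cat_take_drop k (sortG G)).
  by move/cat_sorted2 => [].
move: sk bk; rewrite -(cat_take_drop j (take k (sortG G))) (take_takel _ jk).
rewrite sorted_pairwise; last exact: ltn_trans.
rewrite pairwise_cat mem_cat (negbTE bj) /= => /and3P[/allrelP j_below_k _ _] bd.
exact: j_below_k.
Qed.

Lemma Gseg_initG G j : initial_segment (Gseg G j) G.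
Proof.
have Gfull : Gseg G (maxn j #|` G|) = G.
  apply/fsetP => x; rewrite mem_Gseg take_oversize ?mem_sortG //.
  by rewrite size_sortG leq_maxr.
by rewrite -{2}Gfull; exact: Gseg_init (leq_maxl _ _).
Qed.

Lemma Gseg_of_init F G j : initial_segment F G -> (j <= #|` F|)%N -> Gseg F j = Gseg G j.
Proof.
move=> FG jF; rewrite /Gseg (sortG_init FG) take_cat size_sortG.
case: ltnP => // Fj.
have -> : j = #|` F| by apply/eqP; rewrite eqn_leq jF.
by rewrite subnn take0 cats0 take_oversize // size_sortG.
Qed.

Lemma ptws_cvg_of (U : Type) (Y : topologicalType) (F : set_system {ptws U -> Y})
    (l : {ptws U -> Y}) :
  Filter F -> (forall t, (fun g : {ptws U -> Y} => g t) @ F --> l t) -> F --> l.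
Proof.
move=> FF Fl; apply/(@cvg_sup (forall t : U, Y) U
  (fun t => Topological.class (initial_topology (fun f : (forall i, Y) => f t))) F l FF) => t.
move=> A /=; rewrite (@nbhsE (initial_topology (fun f : (forall i, Y) => f t))).
move=> -[B [[C oC <-] Bl] BA].
have /Fl FC : nbhs (l t) C by rewrite nbhsE; exists C.
by apply: (@filterS _ F FF _ _ _ FC) => g Cg; exact: BA.
Qed.

Section Metric.
Variables (R : realType) (X : topologicalType) (d : X -> X -> R).
Hypothesis dpos : forall x y, 0 <= d x y.
Hypothesis dzero : forall x y, d x y = 0 <-> x = y.
Hypothesis dsym : forall x y, d x y = d y x.
Hypothesis dtri : forall x y z, d x z <= d x y + d y z.
Hypothesis dopen : forall A : set X, open A <->
  forall x, A x -> exists2 e : R, 0 < e & [set y | d x y < e] `<=` A.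

(* The precision 1/(n+1) used at stage n of the approximations. *)
Definition eps (n : nat) : R := (n.+1%:R)^-1.

Lemma eps_gt0 n : 0 < eps n.
Proof. by rewrite /eps invr_gt0 ltr0n. Qed.

Lemma eps_small (e : R) : 0 < e -> exists N, forall n, (N <= n)%N -> eps n < e.
Proof.
move=> e0; have ie : 0 <= e^-1 by rewrite invr_ge0 ltW.
exists (Num.Def.archi_bound e^-1) => n hn.
rewrite /eps invf_plt ?posrE ?ltr0n //.
by apply: (lt_le_trans (archi_boundP ie)); rewrite ler_nat (leq_trans hn).
Qed.

Lemma dist_eq x y : (forall e : R, 0 < e -> d x y < e) -> x = y.
Proof.
move=> small; apply/dzero/eqP; rewrite eq_le dpos andbT leNgt.
by apply/negP => /[dup] /small; rewrite ltxx.
Qed.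

Lemma metric_cvg (u : nat -> X) l :
  (forall e : R, 0 < e -> exists N, forall n, (N <= n)%N -> d (u n) l < e) ->
  u @ \oo --> l.
Proof.
move=> ul A; rewrite nbhsE => -[B [oB Bl] BA].
have [e e0 be] := (dopen B).1 oB l Bl.
have [N hN] := ul e e0.
by exists N => // n /= hn; apply/BA/be; rewrite /= dsym; exact: hN.
Qed.

Lemma open_ball x (e : R) : open [set y | d x y < e].
Proof.
apply/dopen => y /= dy; exists (e - d x y); first by rewrite subr_gt0.
by move=> z /= dz; apply: (le_lt_trans (dtri x y z)); rewrite -ltrBrDl.
Qed.

Lemma dense_sequence (D : set X) (x0 : X) : countable D -> dense D ->
  exists Dn : nat -> X, forall x (e : R), 0 < e -> exists k, d x (Dn k) < e.
Proof.
move=> /countable_injP [fD fD_inj] dD.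
exists (fun k => xget x0 [set x | D x /\ fD x = k]) => x e e0.
have ball_x : [set y | d x y < e] x by rewrite /= (proj2 (dzero x x) erefl).
have [z [dz Dz]] := dD _ (ex_intro _ x ball_x) (open_ball x e).
exists (fD z); case: xgetP => [y _ [Dy fDy]|]; last by move=> nz; case: (nz z).
by have -> : y = z by apply: fD_inj; rewrite ?in_setE.
Qed.

End Metric.

Section Coding.
Variables (R : realType) (E : set R) (X : topologicalType).
Hypothesis E0 : E 0.
Variable V : set (bunch E X).
Variable d : X -> X -> R.
Variable Dn : nat -> X.
Variable eidx : R -> nat.

Local Notation bunch := (bunch E X).
Local Notation inEG := (inEG E).
Local Notation valueAt := (valueAt E0).
Local Notation eps := (eps R).

Definition fcode (G : {fset nat}) (f : nat -> R) : nat :=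
  choice.pickle [seq eidx (f n) | n <- sortG G].

(* An index k with Dn k within eps j of the value of chi at the function of
   [E,Gi] coded by p (0 if p codes no such function). *)
Definition approx (chi : bunch) (Gi : {fset nat}) (j p : nat) : nat :=
  if pselect (exists f, inEG Gi f /\ fcode Gi f = p) is left coded
  then xget 0%N [set k | d (valueAt chi (proj1_sig (cid coded))) (Dn k) < eps j]
  else 0%N.

(* The finite datum recorded at stage j: an initial segment of the support of
   size j, and a table of approximation indices, for the initial segments
   of size i <= j and codes p <= j. *)
Definition Entry := ({fset nat} * seq (seq nat))%type.
Definition entry0 : Entry := (fset0, [::]).

Definition entry (chi : bunch) (j : nat) : Entry :=
  (Gseg (projT1 chi) j,
   [seq [seq approx chi (Gseg (projT1 chi) i) j p | p <- iota 0 j.+1] | i <- iota 0 j.+1]).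

Lemma entry_table chi n i p : (i <= n)%N -> (p <= n)%N ->
  nth 0%N (nth [::] (entry chi n).2 i) p = approx chi (Gseg (projT1 chi) i) n p.
Proof.
move=> i_n p_n; rewrite (nth_map 0%N) ?size_iota ?ltnS // nth_iota ?ltnS // add0n.
by rewrite (nth_map 0%N) ?size_iota ?ltnS // nth_iota ?ltnS.
Qed.

Definition bunch_code (chi : bunch) : seq Entry :=
  [seq entry chi j | j <- iota 0 (#|` projT1 chi|).+1].

Definition realisable (s : seq Entry) : Prop :=
  exists c : nat -> bunch, forall n, (n < size s)%N ->
  [/\ V (c n), projT1 (c n) = (nth entry0 s n).1, #|` projT1 (c n)| = n,
      ((n.+1 < size s)%N -> bprec (c n) (c n.+1)) &
      forall i f, (i <= n)%N -> inEG (projT1 (c i)) f -> (fcode (projT1 (c i)) f <= n)%N ->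
        d (valueAt (c i) f)
          (Dn (nth 0%N (nth [::] (nth entry0 s n).2 i) (fcode (projT1 (c i)) f)))
        < eps n ].

Lemma realisable_nil (b0 : bunch) : realisable [::].
Proof. by exists (fun=> b0). Qed.

Lemma realisable_prefix s w : realisable (s ++ w) -> realisable s.
Proof.
move=> [c hc]; exists c => n ns.
have nsw : (n < size (s ++ w))%N by rewrite size_cat ltn_addr.
have ent_n : nth entry0 s n = nth entry0 (s ++ w) n by rewrite nth_cat ns.
have [Vc supp card chain close] := hc n nsw; split=> //.
- by rewrite supp ent_n.
- by move=> n1s; apply: chain; rewrite size_cat ltn_addr.
- by rewrite ent_n.
Qed.

Hypothesis V_vine : is_vine V.
Hypothesis Dn_dense : forall x (e : R), 0 < e -> exists k, d x (Dn k) < e.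
Hypothesis eidx_inj : {in E &, injective eidx}.

Lemma fcode_inj G f f' : inEG G f -> inEG G f' -> fcode G f = fcode G f' -> f = f'.
Proof.
move=> [Ef f0] [Ef' f0'] /(pcan_inj choice.pickleK) /eq_in_map e.
apply: funext => n; have [nG|nG] := boolP (n \in G); last by rewrite f0 // f0'.
by apply: eidx_inj; rewrite ?in_setE //; apply: e; rewrite mem_sortG.
Qed.

Lemma approxP chi Gi j f : inEG Gi f ->
  d (valueAt chi f) (Dn (approx chi Gi j (fcode Gi f))) < eps j.
Proof.
move=> hf; rewrite /approx; case: pselect => [coded|[]]; last by exists f.
case: (cid coded) => f' [hf' ec] /=; rewrite (fcode_inj hf' hf ec).
apply: (@xgetPex _ 0%N [set k | d (valueAt chi f) (Dn k) < eps j]).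
by apply: Dn_dense; exact: eps_gt0.
Qed.

Lemma approx_eq chi psi Gi j p :
  (forall f, inEG Gi f -> valueAt chi f = valueAt psi f) ->
  approx chi Gi j p = approx psi Gi j p.
Proof.
move=> chipsi; rewrite /approx; case: pselect => // coded.
by case: (cid coded) => f [hf _] /=; rewrite chipsi.
Qed.

Lemma size_bunch_code chi : size (bunch_code chi) = (#|` projT1 chi|).+1.
Proof. by rewrite size_map size_iota. Qed.

Lemma nth_bunch_code chi n : (n <= #|` projT1 chi|)%N ->
  nth entry0 (bunch_code chi) n = entry chi n.
Proof. by move=> hn; rewrite (nth_map 0%N) ?size_iota // nth_iota. Qed.

(* The code of a bunch of V is realised by its own initial restrictions. *)
Lemma bunch_code_realisable chi : V chi -> realisable (bunch_code chi).
Proof.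
move=> Vchi; set G := projT1 chi.
exists (fun n => restr E0 chi (Gseg G n)) => n; rewrite size_bunch_code ltnS => nG.
rewrite nth_bunch_code //; split.
- exact/(V_vine Vchi)/bprec_restr_full/Gseg_initG.
- by [].
- by rewrite /= card_Gseg.
- by move=> _; apply/bprec_restr/Gseg_init.
- move=> i f ni hf cf; rewrite entry_table //.
  by rewrite valueAt_restr //; exact: approxP.
Qed.

Lemma bunch_code_prefix psi chi : bprec psi chi ->
  exists w, bunch_code chi = bunch_code psi ++ w.
Proof.
move=> psichi; have FG := psichi.1; set F := projT1 psi; set G := projT1 chi.
have FleG : (#|` F| <= #|` G|)%N by apply: fsubset_leq_card; exact: FG.1.
exists [seq entry chi j | j <- iota (#|` F|).+1 (#|` G| - #|` F|)].
rewrite /bunch_code -/F -/G -(subnKC (_ : (#|` F|).+1 <= (#|` G|).+1)%N) //.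
rewrite iotaD subSS map_cat; congr (_ ++ _).
apply/eq_in_map => j; rewrite mem_iota add0n ltnS => /andP[_ jF].
rewrite /entry -/F -/G (Gseg_of_init FG jF); congr pair.
apply/eq_in_map => i; rewrite mem_iota add0n ltnS => /andP[_ ij].
have eGseg := Gseg_of_init FG (leq_trans ij jF).
rewrite eGseg; apply/eq_in_map => p _; apply: approx_eq => f hf.
rewrite -eGseg in hf; apply: (bprec_val E0 psichi); exact: inEG_sub (Gseg_sub _ _) hf.
Qed.

Lemma bunch_code_decr chi psi : bprec chi psi -> psi <> chi ->
  kb (bunch_code psi) (bunch_code chi).
Proof.
move=> chipsi ne; have [[|a w] ew] := bunch_code_prefix chipsi; last by rewrite ew kb_ext.
exfalso; apply: ne; symmetry.
have card_eq : #|` projT1 psi| = #|` projT1 chi|.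
  by move: (congr1 size ew); rewrite cats0 !size_bunch_code => -[].
have supp_eq : projT1 chi = projT1 psi.
  by apply/eqP; rewrite eqEfcard chipsi.1.1 card_eq leqnn.
by apply: (bunch_ext (E0 := E0) supp_eq) => f hf; rewrite (bprec_val E0 chipsi hf).
Qed.

(* Step 3: the rank of a bunch is its code, a node of the realisable tree
   (the root outside V). *)
Definition code_rank (b0 : bunch) (chi : bunch) : kb_node realisable :=
  if pselect (V chi) is left Vchi
  then exist _ (bunch_code chi) (bunch_code_realisable Vchi)
  else exist _ [::] (realisable_nil b0).

Lemma code_rank_decr b0 chi psi : V chi -> V psi -> bprec chi psi -> psi <> chi ->
  kb_lt (code_rank b0 psi) (code_rank b0 chi).
Proof.
move=> Vchi Vpsi chipsi ne; rewrite /code_rank /kb_lt.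
by case: pselect => // ?; case: pselect => // ? /=; exact: bunch_code_decr.
Qed.

End Coding.

Section CodeTree.
Variables (R : realType) (E : set R) (X : topologicalType).
Hypothesis E0 : E 0.
Variable V : set (bunch E X).
Variable d : X -> X -> R.
Variable Dn : nat -> X.
Variable eidx : R -> nat.

Local Notation bunch := (bunch E X).
Local Notation inEG := (inEG E).
Local Notation valueAt := (valueAt E0).
Local Notation eps := (eps R).
Local Notation fcode := (fcode eidx).
Local Notation realisable := (realisable E0 V d Dn eidx).

Lemma descending_branch (b : nat -> seq Entry) :
  (forall n, tree_child realisable (b n.+1) (b n)) ->
  exists ent : nat -> Entry, forall n, realisable (mkseq ent n.+1).
Proof.
move=> child.
have size_b n : size (b n) = (size (b 0) + n)%N.
  elim: n => [|n IH]; first by rewrite addn0.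
  by have [_ [a ->]] := child n; rewrite size_rcons IH addnS.
have prefix_b m n : (m <= n)%N -> exists w, b n = b m ++ w.
  elim: n => [|n IH] mn.
    by move: mn; rewrite leqn0 => /eqP ->; exists [::]; rewrite cats0.
  case: (ltngtP m n.+1) mn => // [mn|<-] _; last by exists [::]; rewrite cats0.
  have [w ew] := IH mn; have [_ [a ->]] := child n.
  by exists (rcons w a); rewrite ew rcons_cat.
exists (fun i => nth entry0 (b i.+1) i) => n.
have [realisable_b _] := child n.
suff -> : mkseq (fun i => nth entry0 (b i.+1) i) n.+1 = take n.+1 (b n.+1).
  by apply: (realisable_prefix (w := drop n.+1 (b n.+1))); rewrite cat_take_drop.
apply: (@eq_from_nth _ entry0) => [|i].
  by rewrite size_mkseq size_takel // size_b leq_addl.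
rewrite size_mkseq => i_n; rewrite nth_mkseq // nth_take //.
have [w ->] := prefix_b i.+1 n.+1 i_n.
by rewrite nth_cat size_b addnS ltnS leq_addl.
Qed.

Hypothesis V_closed : vine_closed V.
Hypothesis V_wf : vine_well_founded V.
Hypothesis dpos : forall x y, 0 <= d x y.
Hypothesis dzero : forall x y, d x y = 0 <-> x = y.
Hypothesis dsym : forall x y, d x y = d y x.
Hypothesis dtri : forall x y z, d x z <= d x y + d y z.
Hypothesis dopen : forall A : set X, open A <->
  forall x, A x -> exists2 e : R, 0 < e & [set y | d x y < e] `<=` A.
Hypothesis dcomplete : forall u : nat -> X,
  (forall e : R, 0 < e -> exists N, forall m n, (N <= m)%N -> (N <= n)%N ->
     d (u m) (u n) < e) ->
  exists l, forall e : R, 0 < e -> exists N, forall n, (N <= n)%N -> d (u n) l < e.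

Let half_gt0 (e : R) : 0 < e -> 0 < e / 2.
Proof. by move=> e0; rewrite divr_gt0. Qed.

Section Branch.
Variable ent : nat -> Entry.
Hypothesis branch : forall n, realisable (mkseq ent n.+1).

Let Gi i := (ent i).1.
Let cw n : nat -> bunch := proj1_sig (cid (branch n)).
Let pnt i f k := Dn (nth 0%N (nth [::] (ent k).2 i) (fcode (Gi i) f)).

Lemma branch_witness n k : (k <= n)%N ->
  [/\ V (cw n k), projT1 (cw n k) = Gi k, #|` Gi k| = k,
      ((k < n)%N -> bprec (cw n k) (cw n k.+1)) &
      forall i f, (i <= k)%N -> inEG (Gi i) f -> (fcode (Gi i) f <= k)%N ->
        d (valueAt (cw n i) f) (pnt i f k) < eps k].
Proof.
have size_n j : (j <= n)%N -> (j < size (mkseq ent n.+1))%N by rewrite size_mkseq.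
have spec j (jn : (j <= n)%N) := proj2_sig (cid (branch n)) j (size_n j jn).
move=> kn; have [Vc supp card chain close] := spec k kn.
have supp_i i : (i <= n)%N -> projT1 (cw n i) = Gi i.
  by move=> i_n; have [_ + _ _ _] := spec i i_n; rewrite nth_mkseq.
rewrite nth_mkseq // in supp close; split=> //.
- by rewrite /Gi -supp.
- by move=> kn'; apply: chain; rewrite size_mkseq.
- move=> i f ik; rewrite /pnt -supp_i ?(leq_trans ik) //; exact: close.
Qed.

(* The recorded points for the value at f of the i-th bunch form a Cauchy
   sequence: at stage k + k' one witness is close to both. *)
Lemma pnt_cauchy i f k k' : inEG (Gi i) f ->
  (i + fcode (Gi i) f <= k)%N -> (i + fcode (Gi i) f <= k')%N ->
  d (pnt i f k) (pnt i f k') < eps k + eps k'.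
Proof.
move=> hf hk hk'.
have [_ _ _ _ close] := branch_witness (leq_addr k' k).
have [_ _ _ _ close'] := branch_witness (leq_addl k k').
have near_k := close i f (leq_trans (leq_addr _ _) hk) hf (leq_trans (leq_addl _ _) hk).
have near_k' := close' i f (leq_trans (leq_addr _ _) hk') hf (leq_trans (leq_addl _ _) hk').
apply: (le_lt_trans (dtri _ (valueAt (cw (k + k')%N i) f) _)).
by rewrite dsym; apply: ltrD.
Qed.

(* By completeness, the recorded points converge (the hypothesis inEG is put
   inside the existential so that the limit can be chosen for every f). *)
Lemma pnt_limit i f : exists l, inEG (Gi i) f -> forall e : R, 0 < e ->
  exists N, forall m, (N <= m)%N -> d (pnt i f m) l < e.
Proof.
case: (pselect (inEG (Gi i) f)) => hf; last by exists (Dn 0).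
pose M := (i + fcode (Gi i) f)%N.
have [|l hl] := @dcomplete (fun m => pnt i f (M + m)%N); last first.
  exists l => _ e e0; have [N hN] := hl e e0; exists (M + N)%N => m hm.
  have Mm : (M <= m)%N by apply: leq_trans hm; apply: leq_addr.
  by have := hN (m - M)%N; rewrite subnKC //; apply; rewrite leq_subRL // addnC.
move=> e e0; have [N hN] := eps_small (half_gt0 e0).
exists N => m n hm hn.
apply: (lt_le_trans (pnt_cauchy hf (leq_addr _ _) (leq_addr _ _))).
rewrite [e]splitr; apply: lerD; apply/ltW/hN; exact: leq_trans (leq_addl _ _).
Qed.

Let lim i f := proj1_sig (cid (pnt_limit i f)).

Lemma witness_cvg i f : inEG (Gi i) f -> forall e : R, 0 < e ->
  exists N, forall n, (N <= n)%N -> d (valueAt (cw n i) f) (lim i f) < e.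
Proof.
move=> hf e e0.
have [N1 hN1] := proj2_sig (cid (pnt_limit i f)) hf _ (half_gt0 e0).
have [N2 hN2] := eps_small (half_gt0 e0).
exists (maxn (maxn N1 N2) (i + fcode (Gi i) f)) => n.
rewrite !geq_max => /andP[/andP[n1 n2] n3].
have [_ _ _ _ close] := branch_witness (leqnn n).
have near_n := close i f (leq_trans (leq_addr _ _) n3) hf (leq_trans (leq_addl _ _) n3).
apply: (le_lt_trans (dtri _ (pnt i f n) _)).
by rewrite [e]splitr; apply: ltrD; [exact: lt_trans near_n (hN2 _ n2)|exact: hN1].
Qed.

Lemma lim_consistent i f : inEG (Gi i) f -> inEG (Gi i.+1) f -> lim i.+1 f = lim i f.
Proof.
move=> hf hf'; apply: (dist_eq dpos dzero) => e e0.
have [N1 hN1] := witness_cvg hf' (half_gt0 e0).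
have [N2 hN2] := witness_cvg hf (half_gt0 e0).
pose n := maxn (maxn N1 N2) i.+1.
have n1 : (N1 <= n)%N by rewrite /n !leq_max leqnn.
have n2 : (N2 <= n)%N by rewrite /n !leq_max leqnn orbT.
have n3 : (i < n)%N by rewrite /n !leq_max leqnn orbT.
have [_ supp _ chain _] := branch_witness (ltnW n3).
have hfi : inEG (projT1 (cw n i)) f by rewrite supp.
have ev := bprec_val E0 (chain n3) hfi.
apply: (le_lt_trans (dtri _ (valueAt (cw n i) f) _)).
by rewrite [e]splitr; apply: ltrD; [rewrite dsym -ev; apply: hN1|exact: hN2].
Qed.

Let y i : bunch := existT (fun G => EG E G -> X) (Gi i) (fun fp => lim i (proj1_sig fp)).

(* Each limit bunch is in V, as a pointwise limit of bunches of V with the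
   same support, V being closed. *)
Lemma limit_in_V i : V (y i).
Proof.
pose A := [set x : {ptws EG E (Gi i) -> X} | V (existT (fun G => EG E G -> X) (Gi i) x)].
pose xs (n : nat) : {ptws EG E (Gi i) -> X} :=
  fun fp => valueAt (cw (n + i)%N i) (proj1_sig fp).
have Axs n : A (xs n).
  have [Vc supp _ _ _] := branch_witness (leq_addl n i).
  by rewrite /A /= /xs -(bunch_eta E0 supp).
have A_closed : closed A := @V_closed (Gi i).
rewrite /y; apply: (@closed_cvg nat _ \oo _ xs A A_closed); first exact: nearW.
apply: ptws_cvg_of => -[f hf].
apply: (metric_cvg dsym dopen) => e e0; have [N hN] := witness_cvg hf e0.
by exists N => n hn; apply: hN; apply: leq_trans hn _; apply: leq_addr.
Qed.

Lemma limit_chain i j : (i <= j)%N -> bprec (y i) (y j).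
Proof.
elim: j => [|j IH]; first by rewrite leqn0 => /eqP ->; apply: bprec_refl.
rewrite leq_eqVlt => /orP[/eqP ->|/IH yij]; first exact: bprec_refl.
apply: (bprec_trans E0 yij).
have [_ supp _ chain _] := branch_witness (leqnSn j).
have [_ supp' _ _ _] := branch_witness (leqnn j.+1).
split; first by have := (chain (ltnSn j)).1; rewrite supp supp'.
by move=> f h1 h2 /=; apply: lim_consistent.
Qed.

(* Step 4: the limit bunches form an infinite chain in V. *)
Lemma no_infinite_branch : False.
Proof.
have y_inj : injective y.
  move=> i j /(congr1 (fun b : bunch => #|` projT1 b|)) /=.
  have [_ _ -> _ _] := branch_witness (leqnn i).
  by have [_ _ -> _ _] := branch_witness (leqnn j).
have : finite_set (range y).
  apply: V_wf => [_ [i _ <-]|_ _ [i _ <-] [j _ <-]]; first exact: limit_in_V.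
  by case: (leqP i j) => ij; [left|right]; apply: limit_chain => //; exact: ltnW.
move=> fin_y; apply: infinite_nat; apply: (card_le_finite _ fin_y).
by have := @inj_card_eq _ _ [set: nat] y (in2W y_inj); rewrite card_eq_le => /andP[].
Qed.

End Branch.

Lemma realisable_wf s : Acc (tree_child realisable) s.
Proof.
apply: contrapT => not_acc.
have [b descending] := not_Acc_descending not_acc.
have [ent branch] := descending_branch descending.
exact: no_infinite_branch branch.
Qed.

End CodeTree.

Unset Implicit Arguments.

Theorem proposition3p2 (R : realType) (E : set R) (X : topologicalType)
  (V : set (bunch E X)) :
  countable E -> E 0 ->
  ( (* X is a Polish space: separable and completely metrizable *)
    (exists D : set X, countable D /\ dense D) /\
    exists d : X -> X -> R,
      (forall x y, 0 <= d x y) /\ (forall x y, d x y = 0 <-> x = y) /\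
      (forall x y, d x y = d y x) /\ (forall x y z, d x z <= d x y + d y z) /\
      (forall A : set X, open A <->
         forall x, A x -> exists2 e : R, 0 < e & [set y | d x y < e] `<=` A) /\
      (forall u : nat -> X,
         (forall e : R, 0 < e -> exists N, forall m n, (N <= m)%N -> (N <= n)%N ->
            d (u m) (u n) < e) ->
         exists l, forall e : R, 0 < e -> exists N, forall n, (N <= n)%N -> d (u n) l < e) ) ->
  is_vine V -> vine_closed V ->
  vine_well_founded V ->
  exists (W : Type) (lt : W -> W -> Prop) (D : W -> set (bunch E X)) (A : set (bunch E X)),
    countable [set: W] /\ strict_well_order lt /\
    transfinite_derivatives V lt D A /\ A = set0.
Proof.
move=> E_countable E0 [[D [D_countable D_dense]]
  [d [dpos [dzero [dsym [dtri [dopen dcomplete]]]]]]] V_vine V_closed V_wf.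
have [[chi0 _]|V_empty] := pselect (exists chi, V chi); last first.
  (* an empty vine is ranked by the one-point order *)
  apply: (@derivatives_vanish _ _ _ V unit (fun _ _ => False) (fun _ => tt)).
  - exact: countableP.
  - by split=> //; split=> [[] []|[]]; [right; left|constructor].
  - by move=> chi psi Vchi; case: V_empty; exists chi.
(* otherwise rank bunches by their codes, built from a dense sequence of X
   and an injection of E into nat; the realisable tree is KB well-ordered *)
have [Dn Dn_dense] := dense_sequence dzero dtri dopen (projT2 chi0 (zeroEG E0 _))
  D_countable D_dense.
have /countable_injP [eidx eidx_inj] := E_countable.
pose tree := realisable E0 V d Dn eidx.
have tree_wo : strict_well_order (@kb_lt _ tree).
  apply: kb_lt_wo; first exact: realisable_prefix.
  exact: realisable_wf V_closed V_wf dpos dzero dsym dtri dopen dcomplete.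
apply: (derivatives_vanish (kb_node_countable tree) tree_wo).
exact: code_rank_decr V_vine Dn_dense eidx_inj chi0.
Qed.
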